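(* Let $n\ge1$ be an integer. The cubature formula $$6\int_{\triangle^*}f(x_1,x_2,x_3)\,dx_1dx_2dx_3=\frac1{4n^3}\sum_{0\le k_3\le k_2\le k_1\le n}\lambda^{(n)}_{k_1,k_2,k_3}\,f(\tfrac{k_1}n,\tfrac{k_2}n,\tfrac{k_3}n)$$ is exact for every function $f$ on $\triangle^*$ such that the function $\mathbf t\mapsto f(t_1-t_4,t_2-t_4,t_3-t_4)$ on $\triangle_H$ belongs to $\mathcal{TC}_{2n-1}$.
   Context: $\triangle^*=\{x\in\mathbb R^3: 0\le x_3\le x_2\le x_1\le1\}$. Let $\mathbb R^4_H=\{\mathbf t\in\mathbb R^4: t_1+t_2+t_3+t_4=0\}$, $\mathbb Z^4_H=\mathbb Z^4\cap\mathbb R^4_H$, $\mathbb H=\{\mathbf k\in\mathbb Z^4_H: k_1\equiv k_2\equiv k_3\equiv k_4\pmod4\}$, $\phi_{\mathbf k}(\mathbf t)=e^{\frac{\pi i}{2}\mathbf k\cdot\mathbf t}$, $\mathsf{TC}_{\mathbf k}(\mathbf t)=\frac1{24}\sum_{\sigma\in S_4}\phi_{\mathbf k}(\mathbf t\sigma)$ where $\mathbf t\sigma$ permutes coordinates. $\triangle_H=\{\mathbf t\in\mathbb R^4_H: t_1-t_2,\,t_2-t_3,\,t_3-t_4,\,t_1-t_4\in[0,1]\}$, and $\mathcal{TC}_m=\operatorname{span}\{\mathsf{TC}_{\mathbf k}:\mathbf k\in\mathbb H,\ k_4\le k_3\le k_2\le k_1\le k_4+4m\}$. The weights: $\lambda^{(n)}_{k_1,k_2,k_3}=24$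 if none of the relations (a) $k_1=k_2$, (b) $k_2=k_3$, (c) $k_3=0$, (d) $k_1=n$ holds; $12$ if exactly one holds; $6$ if exactly two hold and they are $\{(a),(c)\}$ or $\{(b),(d)\}$; $4$ if exactly two other ones hold; $1$ if three hold. (Equivalently $\lambda^{(n)}_{k}=\lambda^{(n)}_{\mathbf j}$ for the $\mathbf j\in\mathbb H$ with $k_i=\frac14(j_i-j_4)$, $i=1,2,3$.) *)

From Stdlib Require Import Reals ZArith List.
From Coquelicot Require Import Coquelicot.
Open Scope R_scope.

Definition CRInt (f : R -> C) (a b : R) : C :=
  @RInt C_R_CompleteNormedModule f a b.

Definition int_simplex (f : R -> R -> R -> C) : C :=
  CRInt (fun x1 => CRInt (fun x2 => CRInt (fun x3 => f x1 x2 x3) 0 x2) 0 x1) 0 1.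

Definition R4 := (R * R * R * R)%type.
Definition Z4 := (Z * Z * Z * Z)%type.

Definition r4 (t : R4) (i : nat) : R :=
  match t with (t1, t2, t3, t4) =>
    match i with 0%nat => t1 | 1%nat => t2 | 2%nat => t3 | _ => t4 end
  end.

Definition S4 : list (nat * nat * nat * nat) :=
  flat_map (fun a => flat_map (fun b => flat_map (fun c => flat_map (fun d =>
     if (Nat.eqb a b || Nat.eqb a c || Nat.eqb a d || Nat.eqb b c
         || Nat.eqb b d || Nat.eqb c d)%bool
     then nil else (a, b, c, d) :: nil)
     (seq 0 4)) (seq 0 4)) (seq 0 4)) (seq 0 4).

Definition permute (t : R4) (s : nat * nat * nat * nat) : R4 :=
  match s with (a, b, c, d) => (r4 t a, r4 t b, r4 t c, r4 t d) end.

Definition dot (k : Z4) (t : R4) : R :=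
  match k, t with (k1, k2, k3, k4), (t1, t2, t3, t4) =>
    IZR k1 * t1 + IZR k2 * t2 + IZR k3 * t3 + IZR k4 * t4 end.

Definition cexpi (theta : R) : C := (cos theta, sin theta).

Definition phi (k : Z4) (t : R4) : C := cexpi (PI / 2 * dot k t).

Definition TC (k : Z4) (t : R4) : C :=
  Cmult (RtoC (/ 24))
    (fold_right (fun s acc => Cplus (phi k (permute t s)) acc) (RtoC 0) S4).

Definition in_triH (t : R4) : Prop :=
  match t with (t1, t2, t3, t4) =>
    t1 + t2 + t3 + t4 = 0 /\
    0 <= t1 - t2 <= 1 /\ 0 <= t2 - t3 <= 1 /\
    0 <= t3 - t4 <= 1 /\ 0 <= t1 - t4 <= 1 end.

Definition inH (k : Z4) : Prop :=
  match k with (k1, k2, k3, k4) =>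
    (k1 + k2 + k3 + k4 = 0)%Z /\
    (k1 mod 4 = k2 mod 4)%Z /\ (k2 mod 4 = k3 mod 4)%Z /\
    (k3 mod 4 = k4 mod 4)%Z end.

Definition TC_index (m : Z) (k : Z4) : Prop :=
  inH k /\
  match k with (k1, k2, k3, k4) =>
    (k4 <= k3 /\ k3 <= k2 /\ k2 <= k1 /\ k1 <= k4 + 4 * m)%Z end.

(* g (a function on triangle_H) belongs to TC_m = span{TC_k : k in index set}:
   g agrees on triangle_H with a finite linear combination of such TC_k. *)
Definition in_TC (m : Z) (g : R4 -> C) : Prop :=
  exists L : list (C * Z4),
    List.Forall (fun p => TC_index m (snd p)) L /\
    forall t, in_triH t ->
      g t = fold_right (fun p acc => Cplus (Cmult (fst p) (TC (snd p) t)) acc)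
                       (RtoC 0) L.

Definition lambda (n k1 k2 k3 : nat) : R :=
  let a := Nat.eqb k1 k2 in
  let b := Nat.eqb k2 k3 in
  let c := Nat.eqb k3 0 in
  let d := Nat.eqb k1 n in
  let cnt := ((if a then 1 else 0) + (if b then 1 else 0) +
              (if c then 1 else 0) + (if d then 1 else 0))%nat in
  match cnt with
  | 0%nat => 24
  | 1%nat => 12
  | 2%nat => if ((a && c) || (b && d))%bool then 6 else 4
  | 3%nat => 1
  | _ => 1 (* four relations never hold simultaneously when n >= 1 *)
  end.

Definition cubature_sum (n : nat) (F : nat -> nat -> nat -> C) : C :=
  fold_right Cplus (RtoC 0)
    (flat_map (fun k1 => flat_map (fun k2 => map (fun k3 => F k1 k2 k3)
        (seq 0 (S k2))) (seq 0 (S k1))) (seq 0 (S n))).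

(* Both sides are linear in f, so it suffices to take f = TC_k with k in the
   index set of TC_{2n-1} and to show that both sides are 1 if k = 0 and 0
   otherwise.  In the coordinates x_i = t_i - t_4, TC_k is 1/24 times the sum
   of the products e_a(x1) e_b(x2) e_c(x3), e_m(x) = exp(i pi m x / 2), over the
   24 ordered triples (a,b,c) of entries of k at distinct positions.  Grouping
   the six orderings of each 3-subset of {k1,...,k4}, the integral over the
   simplex becomes an integral over the unit cube, which factors.
   On the grid two cases occur.  If k1 = 0 mod 4, then all k_i are, the
   characters are 1-periodic, and the weights lambda, symmetrized and wrapped
   around, become the constant 24 on the discrete torus {0,...,n-1}^3; so the
   sum factors into geometric sums, which vanish unless the frequency is a
   multiple of 4n, and the bound k1 <= k4 + 4(2n-1) forces k = 0 as soon as
   three entries are such multiples.  If k1 <> 0 mod 4, the symmetry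
   (a,b,c) |-> (n-c, a-c, b-c) of the grid preserves lambda and multiplies TC_k
   by exp(i pi k1 / 2) <> 1, so the sum vanishes. *)

From Stdlib Require Import Reals ZArith List.
From Coquelicot Require Import Coquelicot.
From Stdlib Require Import Lia Lra Permutation.
Open Scope R_scope.

Notation is_deriveC := (@is_derive R_AbsRing C_R_NormedModule).
Notation is_RIntC := (@is_RInt C_R_NormedModule).

(** * Calculus of complex-valued functions of a real variable *)

Lemma cexpi_add a b : cexpi (a + b) = Cmult (cexpi a) (cexpi b).
Proof. unfold cexpi; apply injective_projections; simpl; rewrite ?cos_plus, ?sin_plus; ring. Qed.

Lemma cexpi_0 : cexpi 0 = RtoC 1.
Proof. unfold cexpi; rewrite cos_0, sin_0; reflexivity. Qed.

Lemma is_deriveC_pair (f g : R -> R) x df dg :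
  is_derive f x df -> is_derive g x dg ->
  is_deriveC (fun t => ((f t, g t) : C)) x ((df, dg) : C).
Proof.
  intros Hf Hg.
  apply (is_derive_ext (fun t => @plus C_R_NormedModule (scal (f t) ((1,0):C)) (scal (g t) ((0,1):C)))).
  { intros t; apply injective_projections; simpl; unfold scal, plus; simpl; unfold mult; simpl; ring. }
  replace ((df,dg):C) with (@plus C_R_NormedModule (scal df ((1,0):C)) (scal dg ((0,1):C))).
  2:{ apply injective_projections; simpl; unfold scal, plus; simpl; unfold mult; simpl; ring. }
  apply is_derive_plus; apply (@is_derive_scal_l R_AbsRing C_R_NormedModule); assumption.
Qed.

Lemma is_derive_Cfst (h : R -> C) x d : is_deriveC h x d -> is_derive (fun t => fst (h t)) x (fst d).
Proof.
  intros H. eapply filterdiff_ext_lin.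
  - apply (filterdiff_comp' h (fun t : C_R_NormedModule => fst t) x _ (fun t : C_R_NormedModule => fst t) H).
    apply filterdiff_linear. apply (@is_linear_fst R_AbsRing R_NormedModule R_NormedModule).
  - reflexivity.
Qed.

Lemma is_derive_Csnd (h : R -> C) x d : is_deriveC h x d -> is_derive (fun t => snd (h t)) x (snd d).
Proof.
  intros H. eapply filterdiff_ext_lin.
  - apply (filterdiff_comp' h (fun t : C_R_NormedModule => snd t) x _ (fun t : C_R_NormedModule => snd t) H).
    apply filterdiff_linear. apply (@is_linear_snd R_AbsRing R_NormedModule R_NormedModule).
  - reflexivity.
Qed.

Lemma is_derive_Cmult (f g : R -> C) x df dg :
  is_deriveC f x df -> is_deriveC g x dg ->
  is_deriveC (fun t => Cmult (f t) (g t)) x (Cplus (Cmult df (g x)) (Cmult (f x) dg)).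
Proof.
  intros Hf Hg.
  pose proof (is_derive_Cfst _ _ _ Hf) as F1. pose proof (is_derive_Csnd _ _ _ Hf) as F2.
  pose proof (is_derive_Cfst _ _ _ Hg) as G1. pose proof (is_derive_Csnd _ _ _ Hg) as G2.
  apply (is_derive_ext (fun t => ((fst (f t) * fst (g t) - snd (f t) * snd (g t),
                                   fst (f t) * snd (g t) + snd (f t) * fst (g t)) : C))).
  { intros t. destruct (f t), (g t); reflexivity. }
  replace (Cplus (Cmult df (g x)) (Cmult (f x) dg)) with
   (((fst df * fst (g x) + fst (f x) * fst dg) - (snd df * snd (g x) + snd (f x) * snd dg),
     (fst df * snd (g x) + fst (f x) * snd dg) + (snd df * fst (g x) + snd (f x) * fst dg)) : C).
  2:{ destruct df, dg, (f x), (g x); apply injective_projections; simpl; ring. }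
  apply is_deriveC_pair.
  - apply (@is_derive_minus R_AbsRing R_NormedModule); apply Derive.is_derive_mult; assumption.
  - apply (@is_derive_plus R_AbsRing R_NormedModule); apply Derive.is_derive_mult; assumption.
Qed.

Lemma is_deriveC_mult_const f x df c :
  is_deriveC f x df -> is_deriveC (fun t => Cmult (f t) c) x (Cmult df c).
Proof.
  intros H.
  replace (Cmult df c) with (Cplus (Cmult df c) (Cmult (f x) (@zero C_R_NormedModule))).
  - apply is_derive_Cmult; [exact H | apply (@is_derive_const R_AbsRing C_R_NormedModule)].
  - apply injective_projections; simpl; unfold zero; simpl; ring.
Qed.

Lemma is_derive_cexpi_scal (a x : R) :
  is_deriveC (fun t => cexpi (a * t)) x (Cmult ((0, a) : C) (cexpi (a * x))).
Proof.
  unfold cexpi.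
  replace (Cmult ((0, a) : C) (cos (a * x), sin (a * x))) with
     ((- a * sin (a * x), a * cos (a * x)) : C).
  2:{ apply injective_projections; simpl; ring. }
  apply is_deriveC_pair; auto_derive; auto; ring.
Qed.

Lemma is_RIntC_scal (f : R -> C) a b l c :
  is_RIntC f a b l -> is_RIntC (fun x => Cmult c (f x)) a b (Cmult c l).
Proof.
  intros H.
  pose proof (@is_RInt_fct_extend_fst R_NormedModule R_NormedModule f a b l H) as H1.
  pose proof (@is_RInt_fct_extend_snd R_NormedModule R_NormedModule f a b l H) as H2.
  replace (Cmult c l) with ((fst c * fst l - snd c * snd l, fst c * snd l + snd c * fst l) : C)
    by (destruct c, l; reflexivity).
  apply (@is_RInt_fct_extend_pair R_NormedModule R_NormedModule); simpl.
  - apply (is_RInt_ext (fun x => minus (scal (fst c) (fst (f x))) (scal (snd c) (snd (f x))))).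
    { intros x _. destruct c, (f x); simpl. unfold minus, plus, opp, scal; simpl. unfold mult; simpl. ring. }
    apply (@is_RInt_minus R_NormedModule); apply (@is_RInt_scal R_NormedModule); assumption.
  - apply (is_RInt_ext (fun x => plus (scal (fst c) (snd (f x))) (scal (snd c) (fst (f x))))).
    { intros x _. destruct c, (f x); simpl. unfold plus, scal; simpl. unfold mult; simpl. ring. }
    apply (@is_RInt_plus R_NormedModule); apply (@is_RInt_scal R_NormedModule); assumption.
Qed.

Lemma is_RIntC_plus (f g : R -> C) a b l1 l2 :
  is_RIntC f a b l1 -> is_RIntC g a b l2 -> is_RIntC (fun x => Cplus (f x) (g x)) a b (Cplus l1 l2).
Proof. apply (@is_RInt_plus C_R_NormedModule). Qed.

Lemma is_RIntC_const a b (c : C) : is_RIntC (fun _ => c) a b (Cmult (RtoC (b - a)) c).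
Proof.
  pose proof (@is_RInt_const C_R_NormedModule a b c) as H.
  match type of H with is_RIntC _ _ _ ?v => replace v with (Cmult (RtoC (b - a)) c) in H end.
  - exact H.
  - apply injective_projections; simpl; unfold scal; simpl; unfold mult; simpl; ring.
Qed.

Lemma CRInt_unique f a b l : is_RIntC f a b l -> CRInt f a b = l.
Proof. apply (@is_RInt_unique C_R_CompleteNormedModule). Qed.

Lemma CRInt_ext f g a b :
  (forall x, Rmin a b < x < Rmax a b -> f x = g x) -> CRInt f a b = CRInt g a b.
Proof. apply (@RInt_ext C_R_CompleteNormedModule). Qed.

Lemma is_RIntC_unique_ext f g a b l1 l2 :
  is_RIntC f a b l1 -> is_RIntC g a b l2 -> (forall x, f x = g x) -> l1 = l2.
Proof.
  intros H1 H2 E. rewrite <- (CRInt_unique _ _ _ _ H2).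
  symmetry. apply CRInt_unique. eapply is_RInt_ext; [| exact H1]. intros; apply E.
Qed.

Definition derivableC (h : R -> C) := forall x, exists d, is_deriveC h x d.

Lemma derivableC_continuous h :
  derivableC h -> forall x, @continuous R_UniformSpace C_R_NormedModule h x.
Proof.
  intros H x. destruct (H x) as [d Hd].
  apply (@ex_derive_continuous R_AbsRing C_R_NormedModule). exists d; exact Hd.
Qed.

Lemma derivableC_is_RInt h a b : derivableC h -> is_RIntC h a b (CRInt h a b).
Proof.
  intros H. apply (@RInt_correct C_R_CompleteNormedModule).
  apply (@ex_RInt_continuous C_R_CompleteNormedModule). intros z _.
  apply derivableC_continuous; exact H.
Qed.

Lemma derivableC_plus f g : derivableC f -> derivableC g -> derivableC (fun t => Cplus (f t) (g t)).
Proof.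
  intros Hf Hg x. destruct (Hf x) as [df Hdf], (Hg x) as [dg Hdg].
  exists (Cplus df dg). apply (@is_derive_plus R_AbsRing C_R_NormedModule _ _ x _ _ Hdf Hdg).
Qed.

Lemma derivableC_mult f g : derivableC f -> derivableC g -> derivableC (fun t => Cmult (f t) (g t)).
Proof.
  intros Hf Hg x. destruct (Hf x) as [df Hdf], (Hg x) as [dg Hdg].
  eexists. apply is_derive_Cmult; eassumption.
Qed.

Lemma is_RIntC_derive (F dF : R -> C) a b :
  (forall x, is_deriveC F x (dF x)) -> derivableC dF -> is_RIntC dF a b (Cminus (F b) (F a)).
Proof.
  intros H1 H2.
  replace (Cminus (F b) (F a)) with (@minus C_R_NormedModule (F b) (F a)).
  2:{ apply injective_projections; simpl; unfold minus, plus, opp; simpl; unfold plus, opp; simpl; ring. }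
  apply (@is_RInt_derive C_R_CompleteNormedModule).
  - intros x _. apply H1.
  - intros x _. apply derivableC_continuous; exact H2.
Qed.

Definition prim (h : R -> C) (x : R) : C := CRInt h 0 x.

Lemma prim_0 h : prim h 0 = RtoC 0.
Proof. unfold prim, CRInt. rewrite RInt_point. reflexivity. Qed.

Lemma is_derive_prim h : derivableC h -> forall x, is_deriveC (prim h) x (h x).
Proof.
  intros H x. apply (@is_derive_RInt C_R_NormedModule h (prim h) 0 x).
  - apply filter_forall. intros b. apply derivableC_is_RInt; exact H.
  - apply derivableC_continuous; exact H.
Qed.

Lemma derivableC_prim h : derivableC h -> derivableC (prim h).
Proof. intros H x. exists (h x). apply is_derive_prim; exact H. Qed.

(** * Iterated integrals over the simplex *)

Definition is_simplex_int (g : R -> R -> R -> C) (v : C) : Prop :=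
  exists G H, (forall x1 x2, is_RIntC (g x1 x2) 0 x2 (G x1 x2)) /\
              (forall x1, is_RIntC (G x1) 0 x1 (H x1)) /\ is_RIntC H 0 1 v.

Lemma int_simplex_is g v : is_simplex_int g v -> int_simplex g = v.
Proof.
  intros (G & H & H1 & H2 & H3). unfold int_simplex.
  rewrite <- (CRInt_unique _ _ _ _ H3). apply CRInt_ext. intros x1 _.
  rewrite <- (CRInt_unique _ _ _ _ (H2 x1)). apply CRInt_ext. intros x2 _.
  apply (CRInt_unique _ _ _ _ (H1 x1 x2)).
Qed.

Lemma is_simplex_int_0 : is_simplex_int (fun _ _ _ => RtoC 0) (RtoC 0).
Proof.
  assert (Z : forall a b, is_RIntC (fun _ => RtoC 0) a b (RtoC 0)).
  { intros a b. pose proof (is_RIntC_const a b (RtoC 0)) as H. rewrite Cmult_0_r in H. exact H. }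
  exists (fun _ _ => RtoC 0), (fun _ => RtoC 0). repeat split; intros; apply Z.
Qed.

Lemma is_simplex_int_plus g1 g2 v1 v2 : is_simplex_int g1 v1 -> is_simplex_int g2 v2 ->
  is_simplex_int (fun x1 x2 x3 => Cplus (g1 x1 x2 x3) (g2 x1 x2 x3)) (Cplus v1 v2).
Proof.
  intros (G1 & H1 & A1 & B1 & C1) (G2 & H2 & A2 & B2 & C2).
  exists (fun x1 x2 => Cplus (G1 x1 x2) (G2 x1 x2)), (fun x1 => Cplus (H1 x1) (H2 x1)).
  repeat split; intros; apply is_RIntC_plus; auto.
Qed.

Lemma is_simplex_int_scal c g v : is_simplex_int g v ->
  is_simplex_int (fun x1 x2 x3 => Cmult c (g x1 x2 x3)) (Cmult c v).
Proof.
  intros (G & H & A & B & D).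
  exists (fun x1 x2 => Cmult c (G x1 x2)), (fun x1 => Cmult c (H x1)).
  repeat split; intros; apply is_RIntC_scal; auto.
Qed.

Lemma is_simplex_int_ext g g' v :
  (forall x1 x2 x3, g x1 x2 x3 = g' x1 x2 x3) -> is_simplex_int g v -> is_simplex_int g' v.
Proof.
  intros E (G & H & A & B & D). exists G, H. repeat split; auto.
  intros x1 x2. eapply is_RInt_ext; [| apply A]. intros; apply E.
Qed.

Definition iint2 (b c : R -> C) (x : R) : C := CRInt (fun y => Cmult (b y) (prim c y)) 0 x.

Definition iint3 (a b c : R -> C) : C := CRInt (fun x => Cmult (a x) (iint2 b c x)) 0 1.

Section IteratedIntegrals.

Variables a b c : R -> C.
Hypotheses (Ha : derivableC a) (Hb : derivableC b) (Hc : derivableC c).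

Lemma derivableC_iint2 : derivableC (iint2 b c).
Proof. apply derivableC_prim, derivableC_mult, derivableC_prim; auto. Qed.

Lemma is_simplex_int_prod :
  is_simplex_int (fun x1 x2 x3 => Cmult (Cmult (a x1) (b x2)) (c x3)) (iint3 a b c).
Proof.
  exists (fun x1 x2 => Cmult (Cmult (a x1) (b x2)) (prim c x2)), (fun x1 => Cmult (a x1) (iint2 b c x1)).
  repeat split.
  - intros x1 x2. apply is_RIntC_scal, derivableC_is_RInt; auto.
  - intros x1. eapply is_RInt_ext;
      [| apply is_RIntC_scal, (derivableC_is_RInt (fun y => Cmult (b y) (prim c y)))].
    + intros; simpl. ring.
    + apply derivableC_mult, derivableC_prim; auto.
  - apply derivableC_is_RInt, derivableC_mult, derivableC_iint2; auto.
Qed.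

Lemma iint2_sym x : Cplus (iint2 b c x) (iint2 c b x) = Cmult (prim b x) (prim c x).
Proof.
  assert (D1 : derivableC (fun y => Cmult (b y) (prim c y)))
    by (apply derivableC_mult, derivableC_prim; auto).
  assert (D2 : derivableC (fun y => Cmult (c y) (prim b y)))
    by (apply derivableC_mult, derivableC_prim; auto).
  pose proof (is_RIntC_plus _ _ _ _ _ _ (derivableC_is_RInt _ 0 x D1) (derivableC_is_RInt _ 0 x D2)) as H.
  assert (H' : is_RIntC (fun y => Cplus (Cmult (b y) (prim c y)) (Cmult (c y) (prim b y))) 0 x
       (Cminus (Cmult (prim b x) (prim c x)) (Cmult (prim b 0) (prim c 0)))).
  { eapply is_RInt_ext; [| apply (is_RIntC_derive (fun t => Cmult (prim b t) (prim c t))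
          (fun y => Cplus (Cmult (b y) (prim c y)) (Cmult (prim b y) (c y))))].
    - intros y _. apply injective_projections; simpl; ring.
    - intros y. apply is_derive_Cmult; apply is_derive_prim; auto.
    - apply derivableC_plus; auto.
      apply derivableC_mult; [apply derivableC_prim | ]; auto. }
  rewrite !prim_0 in H'.
  unfold iint2. transitivity (Cminus (Cmult (prim b x) (prim c x)) (Cmult (RtoC 0) (RtoC 0))); [| ring].
  eapply is_RIntC_unique_ext; [exact H | exact H' | reflexivity].
Qed.

Lemma is_RIntC_iint3_pair :
  is_RIntC (fun x => Cmult (a x) (Cmult (prim b x) (prim c x))) 0 1 (Cplus (iint3 a b c) (iint3 a c b)).
Proof.
  pose proof (is_RIntC_plus _ _ _ _ _ _
     (derivableC_is_RInt (fun x => Cmult (a x) (iint2 b c x)) 0 1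
        (derivableC_mult _ _ Ha derivableC_iint2))
     (derivableC_is_RInt (fun x => Cmult (a x) (iint2 c b x)) 0 1
        (derivableC_mult _ _ Ha (derivableC_prim _ (derivableC_mult _ _ Hc (derivableC_prim _ Hb)))))) as H.
  eapply is_RInt_ext; [| exact H]. intros x _. simpl.
  rewrite <- iint2_sym. ring.
Qed.

End IteratedIntegrals.

(* The six simplices obtained by permuting the variables tile the unit cube;
   analytically, this is the product rule for prim a * prim b * prim c. *)
Lemma iint3_sym a b c : derivableC a -> derivableC b -> derivableC c ->
  Cplus (Cplus (Cplus (iint3 a b c) (iint3 a c b)) (Cplus (iint3 b a c) (iint3 b c a)))
        (Cplus (iint3 c a b) (iint3 c b a))
  = Cmult (Cmult (prim a 1) (prim b 1)) (prim c 1).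
Proof.
  intros Ha Hb Hc.
  pose proof (is_RIntC_plus _ _ _ _ _ _ (is_RIntC_plus _ _ _ _ _ _
     (is_RIntC_iint3_pair a b c Ha Hb Hc) (is_RIntC_iint3_pair b a c Hb Ha Hc))
     (is_RIntC_iint3_pair c a b Hc Ha Hb)) as H.
  assert (H' : is_RIntC (fun y => Cplus (Cmult (Cplus (Cmult (a y) (prim b y)) (Cmult (prim a y) (b y))) (prim c y))
                                   (Cmult (Cmult (prim a y) (prim b y)) (c y))) 0 1
             (Cminus (Cmult (Cmult (prim a 1) (prim b 1)) (prim c 1))
                     (Cmult (Cmult (prim a 0) (prim b 0)) (prim c 0)))).
  { apply (is_RIntC_derive (fun t => Cmult (Cmult (prim a t) (prim b t)) (prim c t))).
    - intros y. apply is_derive_Cmult; [apply is_derive_Cmult|]; apply is_derive_prim; auto.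
    - apply derivableC_plus; (apply derivableC_mult; [|auto; apply derivableC_prim; auto]).
      + apply derivableC_plus; apply derivableC_mult; auto; apply derivableC_prim; auto.
      + apply derivableC_mult; apply derivableC_prim; auto. }
  rewrite !prim_0 in H'.
  transitivity (Cminus (Cmult (Cmult (prim a 1) (prim b 1)) (prim c 1)) (Cmult (Cmult (RtoC 0) (RtoC 0)) (RtoC 0))).
  - eapply is_RIntC_unique_ext; [exact H | exact H' |]. intros x. simpl. ring.
  - ring.
Qed.

Definition sumC (l : list C) : C := fold_right Cplus (RtoC 0) l.

Lemma sumC_app l1 l2 : sumC (l1 ++ l2) = Cplus (sumC l1) (sumC l2).
Proof. induction l1; simpl. - ring. - rewrite IHl1. ring. Qed.

Lemma sumC_map_plus {A} (l : list A) f g :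
  sumC (map (fun x => Cplus (f x) (g x)) l) = Cplus (sumC (map f l)) (sumC (map g l)).
Proof. induction l; simpl. - ring. - rewrite IHl. ring. Qed.

Lemma sumC_map_scal {A} (l : list A) c f :
  sumC (map (fun x => Cmult c (f x)) l) = Cmult c (sumC (map f l)).
Proof. induction l; simpl. - ring. - rewrite IHl. ring. Qed.

Lemma sumC_map_scal_r {A} (l : list A) c f :
  sumC (map (fun x => Cmult (f x) c) l) = Cmult (sumC (map f l)) c.
Proof. induction l; simpl. - ring. - rewrite IHl. ring. Qed.

Lemma sumC_map_zero {A} (l : list A) : sumC (map (fun _ => RtoC 0) l) = RtoC 0.
Proof. induction l; simpl; auto. rewrite IHl. ring. Qed.

Lemma sumC_map_ext {A} (l : list A) f g :
  (forall x, In x l -> f x = g x) -> sumC (map f l) = sumC (map g l).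
Proof. intros H. f_equal. apply map_ext_in. auto. Qed.

Lemma sumC_flat_map {A B} (l : list A) (f : A -> list B) (g : B -> C) :
  sumC (map g (flat_map f l)) = sumC (map (fun x => sumC (map g (f x))) l).
Proof. induction l; simpl; auto. rewrite map_app, sumC_app, IHl. reflexivity. Qed.

Lemma sumC_flat_map_sumC {A} (l : list A) (f : A -> list C) :
  sumC (flat_map f l) = sumC (map (fun x => sumC (f x)) l).
Proof. induction l; simpl; auto. rewrite sumC_app, IHl. reflexivity. Qed.

Lemma sumC_swap {A B} (l1 : list A) (l2 : list B) (g : A -> B -> C) :
  sumC (map (fun x => sumC (map (fun y => g x y) l2)) l1) =
  sumC (map (fun y => sumC (map (fun x => g x y) l1)) l2).
Proof.
  induction l1 as [|a l1 IH]; simpl.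
  - symmetry. apply sumC_map_zero.
  - rewrite IH. rewrite <- sumC_map_plus. reflexivity.
Qed.

Lemma sumC_perm l l' : Permutation l l' -> sumC l = sumC l'.
Proof.
  induction 1; simpl; auto.
  - rewrite IHPermutation; auto.
  - unfold sumC; simpl. ring.
  - congruence.
Qed.

Lemma sumC_if {A} (l : list A) (b : bool) f :
  (if b then sumC (map f l) else RtoC 0) = sumC (map (fun x => if b then f x else RtoC 0) l).
Proof. destruct b; auto. symmetry; apply sumC_map_zero. Qed.

Lemma sumC_trunc m n (f : nat -> C) : (m <= n)%nat ->
  sumC (map f (seq 0 (S m))) = sumC (map (fun x => if Nat.leb x m then f x else RtoC 0) (seq 0 (S n))).
Proof.
  intros H. replace (S n) with (S m + (n - m))%nat by lia. rewrite seq_app, !map_app, !sumC_app.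
  transitivity (Cplus (sumC (map f (seq 0 (S m)))) (RtoC 0)). { ring. }
  f_equal.
  - apply sumC_map_ext. intros x Hx. apply in_seq in Hx. destruct (Nat.leb_spec x m); [reflexivity|lia].
  - rewrite (sumC_map_ext _ _ (fun _ => RtoC 0)). symmetry; apply sumC_map_zero.
    intros x Hx. apply in_seq in Hx. destruct (Nat.leb_spec x m); [lia|reflexivity].
Qed.

Lemma sumC_seq_wrap n (h : nat -> C) : (1 <= n)%nat ->
  sumC (map h (seq 0 (S n))) =
  sumC (map (fun b => Cplus (h b) (if Nat.eqb b 0 then h n else RtoC 0)) (seq 0 n)).
Proof.
  intros Hn. rewrite sumC_map_plus. rewrite seq_S, map_app, sumC_app. simpl (map h (n :: nil)).
  f_equal. destruct n as [|n]; [lia|]. simpl. rewrite (sumC_map_ext _ _ (fun _ => RtoC 0)).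
  - rewrite sumC_map_zero. ring.
  - intros x Hx. apply in_seq in Hx. destruct (Nat.eqb_spec x 0); [lia|reflexivity].
Qed.

Lemma Cpow_one j : Cpow (RtoC 1) j = RtoC 1.
Proof. induction j; simpl; auto. rewrite IHj. ring. Qed.

Lemma sum_ones n : forall s, sumC (map (fun j => Cpow (RtoC 1) j) (seq s n)) = RtoC (INR n).
Proof.
  induction n as [|n IH]; intros s; [reflexivity|].
  change (sumC (map (fun j => Cpow (RtoC 1) j) (seq s (S n)))) with
    (Cplus (Cpow (RtoC 1) s) (sumC (map (fun j => Cpow (RtoC 1) j) (seq (S s) n)))).
  rewrite IH, Cpow_one, S_INR. apply injective_projections; simpl; ring.
Qed.

Lemma geometric_sum (z : C) n : Cmult (Cminus z (RtoC 1)) (sumC (map (fun j => Cpow z j) (seq 0 n))) =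
  Cminus (Cpow z n) (RtoC 1).
Proof.
  induction n as [|n IH].
  - simpl. ring.
  - rewrite seq_S, map_app, sumC_app. simpl (sumC (map _ (n :: nil))).
    transitivity (Cplus (Cmult (Cminus z (RtoC 1)) (sumC (map (fun j => Cpow z j) (seq 0 n))))
                        (Cmult (Cminus z (RtoC 1)) (Cplus (Cpow z n) (RtoC 0)))).
    { apply injective_projections; simpl; ring. }
    rewrite IH. simpl Cpow. ring.
Qed.

(** * One-dimensional characters *)

Definition cexpZ (m : Z) (x : R) : C := cexpi (PI / 2 * IZR m * x).

Lemma cexpi_2piZ q : cexpi (2 * PI * IZR q) = RtoC 1.
Proof.
  unfold cexpi. destruct (Z_le_gt_dec 0 q) as [Hq|Hq].
  - rewrite <- (Z2Nat.id q) by lia. rewrite <- INR_IZR_INZ.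
    pose proof (cos_period 0 (Z.to_nat q)) as H1. pose proof (sin_period 0 (Z.to_nat q)) as H2.
    rewrite Rplus_0_l, cos_0 in H1. rewrite Rplus_0_l, sin_0 in H2.
    replace (2 * PI * INR (Z.to_nat q)) with (2 * INR (Z.to_nat q) * PI) by ring.
    rewrite H1, H2. reflexivity.
  - replace q with (- Z.of_nat (Z.to_nat (- q)))%Z by lia. rewrite opp_IZR, <- INR_IZR_INZ.
    pose proof (cos_period 0 (Z.to_nat (-q))) as H1. pose proof (sin_period 0 (Z.to_nat (-q))) as H2.
    rewrite Rplus_0_l, cos_0 in H1. rewrite Rplus_0_l, sin_0 in H2.
    replace (2 * PI * - INR (Z.to_nat (-q))) with (- (2 * INR (Z.to_nat (-q)) * PI)) by ring.
    rewrite cos_neg, sin_neg, H1, H2, Ropp_0. reflexivity.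
Qed.

Lemma cexpi_eq_1 th : cexpi th = RtoC 1 -> exists q : Z, th = 2 * PI * IZR q.
Proof.
  intros H. unfold cexpi in H. injection H. intros Hs Hc.
  destruct (sin_eq_0_0 th Hs) as [k Hk].
  destruct (Zeven_odd_dec k) as [He|Ho].
  - apply Zeven_ex in He. destruct He as [q Hq]. exists q. rewrite Hk, Hq, mult_IZR. simpl. ring.
  - apply Zodd_ex in Ho. destruct Ho as [q Hq]. exfalso.
    assert (E : cexpi th = cexpi (PI + 2 * PI * IZR q)).
    { f_equal. rewrite Hk, Hq, plus_IZR, mult_IZR. simpl. ring. }
    rewrite cexpi_add, cexpi_2piZ in E. unfold cexpi in E. rewrite cos_PI, sin_PI, H in E.
    injection E. intros. lra.
Qed.

Lemma cexpi_mod4 a b : (a mod 4 = b mod 4)%Z -> cexpi (PI / 2 * IZR a) = cexpi (PI / 2 * IZR b).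
Proof.
  intros H.
  assert (E : a = (b + 4 * (a / 4 - b / 4))%Z).
  { pose proof (Z.div_mod a 4 ltac:(lia)). pose proof (Z.div_mod b 4 ltac:(lia)). lia. }
  rewrite E, plus_IZR, mult_IZR.
  replace (PI / 2 * (IZR b + IZR 4 * IZR (a / 4 - b / 4))) with
     (PI / 2 * IZR b + 2 * PI * IZR (a / 4 - b / 4)) by (simpl; field).
  rewrite cexpi_add, cexpi_2piZ. ring.
Qed.

Lemma cexpZ_1_mod4_0 m : (m mod 4 = 0)%Z -> cexpZ m 1 = RtoC 1.
Proof.
  intros H. unfold cexpZ. rewrite Rmult_1_r, (cexpi_mod4 m 0) by (rewrite H; reflexivity).
  rewrite Rmult_0_r. apply cexpi_0.
Qed.

Lemma cexpi_mult_INR j th : cexpi (INR j * th) = Cpow (cexpi th) j.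
Proof.
  induction j as [|j IH].
  - simpl. rewrite Rmult_0_l. apply cexpi_0.
  - rewrite S_INR. replace ((INR j + 1) * th) with (th + INR j * th) by ring.
    rewrite cexpi_add, IH. reflexivity.
Qed.

Lemma cexpZ_0 m : cexpZ m 0 = RtoC 1.
Proof. unfold cexpZ. rewrite Rmult_0_r. apply cexpi_0. Qed.

Lemma is_derive_cexpZ m x : is_deriveC (cexpZ m) x (Cmult ((0, PI/2*IZR m) : C) (cexpZ m x)).
Proof. apply (is_derive_cexpi_scal (PI/2*IZR m) x). Qed.

Lemma derivableC_cexpZ m : derivableC (cexpZ m).
Proof. intros x. eexists. apply is_derive_cexpZ. Qed.

Lemma prim_cexpZ_1 m : m <> 0%Z ->
  prim (cexpZ m) 1 = Cdiv (Cminus (cexpZ m 1) (RtoC 1)) ((0, PI/2*IZR m) : C).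
Proof.
  intros Hm. set (im := (0, PI/2*IZR m) : C).
  assert (Him : im <> RtoC 0).
  { intros H. injection H. intros H1. apply Hm. apply eq_IZR.
    assert (PI <> 0) by (pose proof PI_RGT_0; lra). nra. }
  assert (H : is_RIntC (cexpZ m) 0 1
                (Cminus (Cmult (cexpZ m 1) (Cinv im)) (Cmult (cexpZ m 0) (Cinv im)))).
  { eapply is_RInt_ext; [| apply (is_RIntC_derive (fun t => Cmult (cexpZ m t) (Cinv im))
         (fun t => Cmult (Cmult im (cexpZ m t)) (Cinv im)))].
    - intros x _. match goal with |- ?a = ?b => change (@eq C a b) end. cbv beta. field. exact Him.
    - intros x. apply is_deriveC_mult_const, is_derive_cexpZ.
    - apply derivableC_mult; [apply derivableC_mult |]; intros x; eexists.
      + apply (@is_derive_const R_AbsRing C_R_NormedModule).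
      + apply is_derive_cexpZ.
      + apply (@is_derive_const R_AbsRing C_R_NormedModule). }
  unfold prim. rewrite (CRInt_unique _ _ _ _ H), cexpZ_0. field. exact Him.
Qed.

Lemma prim_cexpZ0_1 : prim (cexpZ 0) 1 = RtoC 1.
Proof.
  unfold prim. apply CRInt_unique.
  pose proof (is_RIntC_const 0 1 (RtoC 1)) as H.
  replace (Cmult (RtoC (1 - 0)) (RtoC 1)) with (RtoC 1) in H by (rewrite Rminus_0_r; ring).
  eapply is_RInt_ext; [| exact H]. intros x _.
  unfold cexpZ. rewrite Rmult_0_r, Rmult_0_l. symmetry; apply cexpi_0.
Qed.

Definition int01_cexpZ (m : Z) : C := prim (cexpZ m) 1.

Lemma int01_cexpZ_mod4_0 m :
  (m mod 4 = 0)%Z -> int01_cexpZ m = if Z.eqb m 0 then RtoC 1 else RtoC 0.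
Proof.
  intros H. unfold int01_cexpZ. destruct (Z.eqb_spec m 0) as [->|Hm].
  - apply prim_cexpZ0_1.
  - rewrite prim_cexpZ_1, cexpZ_1_mod4_0 by auto. unfold Cdiv. ring.
Qed.

Lemma int01_cexpZ_neq0 m : m <> 0%Z ->
  int01_cexpZ m = Cmult (Cdiv (Cminus (cexpZ m 1) (RtoC 1)) ((0, PI/2) : C)) (RtoC (/ IZR m)).
Proof.
  intros Hm. unfold int01_cexpZ. rewrite prim_cexpZ_1 by auto.
  assert (HI : IZR m <> 0) by (apply not_0_IZR; auto).
  assert (HP : PI <> 0) by (pose proof PI_RGT_0; lra).
  replace ((0, PI/2*IZR m) : C) with (Cmult ((0, PI/2) : C) (RtoC (IZR m)))
    by (apply injective_projections; simpl; ring).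
  rewrite RtoC_inv by auto.
  field. split.
  - intros H. apply HI. injection H. auto.
  - intros H. injection H. intros. lra.
Qed.

(** * The basis functions TC_k in simplex coordinates *)

(* The point of R^4_H with t_i - t_4 = x_i. *)
Definition triH_point (x1 x2 x3 : R) : R4 :=
  (x1 - (x1+x2+x3)/4, x2 - (x1+x2+x3)/4, x3 - (x1+x2+x3)/4, -((x1+x2+x3)/4)).

Lemma in_triH_point x1 x2 x3 : 0 <= x3 <= x2 -> x2 <= x1 <= 1 -> in_triH (triH_point x1 x2 x3).
Proof. intros. unfold in_triH, triH_point. repeat split; lra. Qed.

Definition cexpZ3 (a b c : Z) (x1 x2 x3 : R) : C :=
  Cmult (Cmult (cexpZ a x1) (cexpZ b x2)) (cexpZ c x3).

Lemma cexpZ3_cexpi a b c x1 x2 x3 :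
  cexpZ3 a b c x1 x2 x3 = cexpi (PI/2*IZR a*x1 + PI/2*IZR b*x2 + PI/2*IZR c*x3).
Proof. unfold cexpZ3, cexpZ. rewrite !cexpi_add. reflexivity. Qed.

Definition uncurry3 {A B : Type} (F : A -> A -> A -> B) (t : A * A * A) : B :=
  match t with (a, b, c) => F a b c end.

(* For sigma running through S4 in the order of its enumeration, the triple
   (k_{sigma^-1 1}, k_{sigma^-1 2}, k_{sigma^-1 3}): as k1 + k2 + k3 + k4 = 0,
   it determines phi_k (t sigma) at t = triH_point x1 x2 x3. *)
Definition triples24 (k1 k2 k3 k4 : Z) : list (Z * Z * Z) :=
  (k1,k2,k3)::(k1,k2,k4)::(k1,k3,k2)::(k1,k4,k2)::(k1,k3,k4)::(k1,k4,k3)::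
  (k2,k1,k3)::(k2,k1,k4)::(k3,k1,k2)::(k4,k1,k2)::(k3,k1,k4)::(k4,k1,k3)::
  (k2,k3,k1)::(k2,k4,k1)::(k3,k2,k1)::(k4,k2,k1)::(k3,k4,k1)::(k4,k3,k1)::
  (k2,k3,k4)::(k2,k4,k3)::(k3,k2,k4)::(k4,k2,k3)::(k3,k4,k2)::(k4,k3,k2)::nil.

Lemma S4_enum : S4 = (0,1,2,3)%nat::(0,1,3,2)%nat::(0,2,1,3)%nat::(0,2,3,1)%nat::(0,3,1,2)%nat::(0,3,2,1)%nat::
  (1,0,2,3)%nat::(1,0,3,2)%nat::(1,2,0,3)%nat::(1,2,3,0)%nat::(1,3,0,2)%nat::(1,3,2,0)%nat::
  (2,0,1,3)%nat::(2,0,3,1)%nat::(2,1,0,3)%nat::(2,1,3,0)%nat::(2,3,0,1)%nat::(2,3,1,0)%nat::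
  (3,0,1,2)%nat::(3,0,2,1)%nat::(3,1,0,2)%nat::(3,1,2,0)%nat::(3,2,0,1)%nat::(3,2,1,0)%nat::nil.
Proof. reflexivity. Qed.

Lemma TC_triH_point k1 k2 k3 k4 x1 x2 x3 : (k1 + k2 + k3 + k4 = 0)%Z ->
  TC (k1,k2,k3,k4) (triH_point x1 x2 x3) =
  Cmult (RtoC (/24))
    (sumC (map (uncurry3 (fun a b c => cexpZ3 a b c x1 x2 x3)) (triples24 k1 k2 k3 k4))).
Proof.
  intros hk.
  assert (E : IZR k4 = - IZR k1 - IZR k2 - IZR k3).
  { replace k4 with (- k1 - k2 - k3)%Z by lia. rewrite !minus_IZR, opp_IZR. ring. }
  unfold TC. rewrite S4_enum. simpl fold_right. unfold sumC. simpl map. simpl fold_right.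
  f_equal. unfold phi, permute, dot, triH_point. simpl r4.
  repeat (f_equal; [rewrite cexpZ3_cexpi; f_equal; rewrite E; field |]).
  f_equal. rewrite cexpZ3_cexpi; f_equal; rewrite E; field.
Qed.

Definition sym6 (F : Z -> Z -> Z -> C) (a b c : Z) : C :=
  Cplus (Cplus (Cplus (F a b c) (F a c b)) (Cplus (F b a c) (F b c a))) (Cplus (F c a b) (F c b a)).

Definition sum_3subsets (g : Z -> Z -> Z -> C) (k1 k2 k3 k4 : Z) : C :=
  Cplus (Cplus (Cplus (g k1 k2 k3) (g k1 k2 k4)) (g k1 k3 k4)) (g k2 k3 k4).

Lemma sumC_triples24 F k1 k2 k3 k4 :
  sumC (map (uncurry3 F) (triples24 k1 k2 k3 k4)) = sum_3subsets (sym6 F) k1 k2 k3 k4.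
Proof. unfold sumC, sum_3subsets, sym6, triples24. simpl. ring. Qed.

Definition delta0 (k : Z4) : C := match k with (k1,k2,k3,k4) =>
  if (Z.eqb k1 0 && Z.eqb k2 0 && Z.eqb k3 0 && Z.eqb k4 0)%bool then RtoC 1 else RtoC 0 end.

(** * The integral of TC_k over the simplex *)

Lemma is_simplex_int_sumC {A : Type} (l : list A) (F : A -> R -> R -> R -> C) (V : A -> C) :
  (forall a, In a l -> is_simplex_int (F a) (V a)) ->
  is_simplex_int (fun x1 x2 x3 => sumC (map (fun a => F a x1 x2 x3) l)) (sumC (map V l)).
Proof.
  induction l as [|a l IH]; intros H; simpl.
  - apply is_simplex_int_0.
  - apply (is_simplex_int_plus (F a) (fun x1 x2 x3 => sumC (map (fun a => F a x1 x2 x3) l))).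
    + apply H; left; auto.
    + apply IH. intros; apply H; right; auto.
Qed.

Lemma int01_cexpZ_sum_3subsets k1 k2 k3 k4 : inH (k1,k2,k3,k4) ->
  Cmult (RtoC 6) (Cmult (RtoC (/24)) (sum_3subsets
    (fun a b c => Cmult (Cmult (int01_cexpZ a) (int01_cexpZ b)) (int01_cexpZ c)) k1 k2 k3 k4))
  = delta0 (k1,k2,k3,k4).
Proof.
  intros (hs & h12 & h23 & h34). unfold sum_3subsets.
  destruct (Z.eq_dec k1 0) as [z1|z1]; [|destruct (Z.eq_dec k2 0) as [z2|z2];
    [|destruct (Z.eq_dec k3 0) as [z3|z3]; [|destruct (Z.eq_dec k4 0) as [z4|z4]]]].
  5:{
    assert (ez2 : cexpZ k2 1 = cexpZ k1 1) by (unfold cexpZ; rewrite !Rmult_1_r; apply cexpi_mod4; lia).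
    assert (ez3 : cexpZ k3 1 = cexpZ k1 1) by (unfold cexpZ; rewrite !Rmult_1_r; apply cexpi_mod4; lia).
    assert (ez4 : cexpZ k4 1 = cexpZ k1 1) by (unfold cexpZ; rewrite !Rmult_1_r; apply cexpi_mod4; lia).
    rewrite !int01_cexpZ_neq0, ez2, ez3, ez4 by auto.
    set (w := Cdiv (Cminus (cexpZ k1 1) (RtoC 1)) ((0, PI/2) : C)).
    (* The sum of 1/(ka kb kc) over the 3-subsets is (k1+k2+k3+k4)/(k1 k2 k3 k4) = 0. *)
    assert (S : / IZR k1 * / IZR k2 * / IZR k3 + / IZR k1 * / IZR k2 * / IZR k4 +
                / IZR k1 * / IZR k3 * / IZR k4 + / IZR k2 * / IZR k3 * / IZR k4 = 0).
    { assert (E4 : IZR k4 = - IZR k1 - IZR k2 - IZR k3).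
      { replace k4 with (-k1-k2-k3)%Z by lia. rewrite !minus_IZR, opp_IZR. ring. }
      assert (IZR k1 <> 0) by (apply not_0_IZR; auto).
      assert (IZR k2 <> 0) by (apply not_0_IZR; auto).
      assert (IZR k3 <> 0) by (apply not_0_IZR; auto).
      assert (IZR k4 <> 0) by (apply not_0_IZR; auto).
      rewrite E4 in *. field. auto. }
    unfold delta0. destruct (Z.eqb_spec k1 0); [contradiction|]. simpl.
    transitivity (Cmult (RtoC 6) (Cmult (RtoC (/24)) (Cmult (Cmult (Cmult w w) w)
        (RtoC (/ IZR k1 * / IZR k2 * / IZR k3 + / IZR k1 * / IZR k2 * / IZR k4 +
                / IZR k1 * / IZR k3 * / IZR k4 + / IZR k2 * / IZR k3 * / IZR k4))))).
    - apply injective_projections; simpl; ring.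
    - rewrite S. ring. }
  (* One ki vanishes, so all are divisible by 4. *)
  all: assert (M : (k1 mod 4 = 0 /\ k2 mod 4 = 0 /\ k3 mod 4 = 0 /\ k4 mod 4 = 0)%Z)
         by (subst; change (0 mod 4)%Z with 0%Z in *; repeat split; congruence).
  all: destruct M as (M1 & M2 & M3 & M4).
  all: rewrite (int01_cexpZ_mod4_0 k1 M1), (int01_cexpZ_mod4_0 k2 M2),
               (int01_cexpZ_mod4_0 k3 M3), (int01_cexpZ_mod4_0 k4 M4).
  all: unfold delta0.
  all: destruct (Z.eqb_spec k1 0), (Z.eqb_spec k2 0), (Z.eqb_spec k3 0), (Z.eqb_spec k4 0);
       try (exfalso; lia); simpl; apply injective_projections; simpl; field.
Qed.

Lemma is_simplex_int_TC k1 k2 k3 k4 : inH (k1,k2,k3,k4) ->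
  exists V, is_simplex_int (fun x1 x2 x3 => TC (k1,k2,k3,k4) (triH_point x1 x2 x3)) V /\
            Cmult (RtoC 6) V = delta0 (k1,k2,k3,k4).
Proof.
  intros Hk. pose proof Hk as (hs & _).
  eexists. split.
  - eapply is_simplex_int_ext. { intros x1 x2 x3. symmetry. apply TC_triH_point. exact hs. }
    apply is_simplex_int_scal.
    apply (is_simplex_int_sumC _ (fun t x1 x2 x3 => uncurry3 (fun a b c => cexpZ3 a b c x1 x2 x3) t)
                     (uncurry3 (fun a b c => iint3 (cexpZ a) (cexpZ b) (cexpZ c)))).
    intros [[a b] c] _. apply is_simplex_int_prod; apply derivableC_cexpZ.
  - rewrite sumC_triples24. unfold sum_3subsets, sym6.
    rewrite !iint3_sym by apply derivableC_cexpZ.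
    apply int01_cexpZ_sum_3subsets; auto.
Qed.

(** * Weighted sums over the grid *)

Definition simplex_sum (n : nat) (F : nat -> nat -> nat -> C) : C :=
  sumC (map (fun a1 => sumC (map (fun a2 => sumC (map (fun a3 => F a1 a2 a3)
     (seq 0 (S a2)))) (seq 0 (S a1)))) (seq 0 (S n))).

Lemma cubature_sum_simplex_sum n F : cubature_sum n F = simplex_sum n F.
Proof.
  unfold cubature_sum, simplex_sum. change (fold_right Cplus (RtoC 0)) with sumC.
  rewrite sumC_flat_map_sumC.
  apply sumC_map_ext; intros a1 _. rewrite sumC_flat_map_sumC. reflexivity.
Qed.

Lemma simplex_sum_plus n F G :
  simplex_sum n (fun a b c => Cplus (F a b c) (G a b c)) = Cplus (simplex_sum n F) (simplex_sum n G).
Proof.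
  unfold simplex_sum. rewrite <- sumC_map_plus. apply sumC_map_ext; intros.
  rewrite <- sumC_map_plus. apply sumC_map_ext; intros.
  rewrite <- sumC_map_plus. reflexivity.
Qed.

Lemma simplex_sum_scal n c F : simplex_sum n (fun a b d => Cmult c (F a b d)) = Cmult c (simplex_sum n F).
Proof.
  unfold simplex_sum. rewrite <- sumC_map_scal. apply sumC_map_ext; intros.
  rewrite <- sumC_map_scal. apply sumC_map_ext; intros.
  rewrite <- sumC_map_scal. reflexivity.
Qed.

Lemma simplex_sum_0 n : simplex_sum n (fun _ _ _ => RtoC 0) = RtoC 0.
Proof.
  unfold simplex_sum. rewrite (sumC_map_ext _ _ (fun _ => RtoC 0)). apply sumC_map_zero.
  intros a _. rewrite (sumC_map_ext _ _ (fun _ => RtoC 0)). apply sumC_map_zero.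
  intros b _. apply sumC_map_zero.
Qed.

Lemma simplex_sum_ext n F G :
  (forall a b c, (c <= b <= a)%nat -> (a <= n)%nat -> F a b c = G a b c) ->
  simplex_sum n F = simplex_sum n G.
Proof.
  intros H. unfold simplex_sum. apply sumC_map_ext; intros a Ha. apply in_seq in Ha.
  apply sumC_map_ext; intros b Hb. apply in_seq in Hb.
  apply sumC_map_ext; intros c Hc. apply in_seq in Hc. apply H; lia.
Qed.

Lemma simplex_sum_sumC {A} n (l : list A) (G : A -> nat -> nat -> nat -> C) :
  simplex_sum n (fun a b c => sumC (map (fun t => G t a b c) l)) =
  sumC (map (fun t => simplex_sum n (G t)) l).
Proof.
  induction l as [|t l IH]; simpl.
  - apply simplex_sum_0.
  - rewrite simplex_sum_plus, IH. reflexivity.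
Qed.

Definition box_sum (m : nat) (h : nat -> nat -> nat -> C) : C :=
  sumC (map (fun a => sumC (map (fun b => sumC (map (fun c => h a b c)
     (seq 0 m))) (seq 0 m))) (seq 0 m)).

Lemma box_sum_ext m h g :
  (forall a b c, (a < m)%nat -> (b < m)%nat -> (c < m)%nat -> h a b c = g a b c) ->
  box_sum m h = box_sum m g.
Proof.
  intros H. unfold box_sum. apply sumC_map_ext; intros a Ha. apply in_seq in Ha.
  apply sumC_map_ext; intros b Hb. apply in_seq in Hb.
  apply sumC_map_ext; intros c Hc. apply in_seq in Hc. apply H; lia.
Qed.

Lemma box_sum_swap12 m h : box_sum m h = box_sum m (fun x y z => h y x z).
Proof. apply sumC_swap. Qed.

Lemma box_sum_swap23 m h : box_sum m h = box_sum m (fun x y z => h x z y).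
Proof. unfold box_sum. apply sumC_map_ext; intros. apply sumC_swap. Qed.

Lemma box_sum_plus m F G :
  box_sum m (fun a b c => Cplus (F a b c) (G a b c)) = Cplus (box_sum m F) (box_sum m G).
Proof.
  unfold box_sum. rewrite <- sumC_map_plus. apply sumC_map_ext; intros.
  rewrite <- sumC_map_plus. apply sumC_map_ext; intros.
  rewrite <- sumC_map_plus. reflexivity.
Qed.

Lemma box_sum_prod m u v w :
  box_sum m (fun a b c => Cmult (Cmult (u a) (v b)) (w c)) =
  Cmult (Cmult (sumC (map u (seq 0 m))) (sumC (map v (seq 0 m)))) (sumC (map w (seq 0 m))).
Proof.
  unfold box_sum.
  transitivity (sumC (map (fun a => Cmult (u a)
    (Cmult (sumC (map v (seq 0 m))) (sumC (map w (seq 0 m))))) (seq 0 m))).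
  - apply sumC_map_ext; intros a _.
    transitivity (sumC (map (fun b => Cmult (Cmult (u a) (v b)) (sumC (map w (seq 0 m)))) (seq 0 m))).
    + apply sumC_map_ext; intros b _. rewrite <- sumC_map_scal. reflexivity.
    + rewrite sumC_map_scal_r, sumC_map_scal. ring.
  - rewrite sumC_map_scal_r. ring.
Qed.

Definition lambda0 (n x y z : nat) : R :=
  if (Nat.leb y x && Nat.leb z y)%bool then lambda n x y z else 0.

Lemma simplex_sum_box_sum n X :
  simplex_sum n (fun a b c => Cmult (RtoC (lambda n a b c)) (X a b c)) =
  box_sum (S n) (fun a b c => Cmult (RtoC (lambda0 n a b c)) (X a b c)).
Proof.
  unfold simplex_sum, box_sum. apply sumC_map_ext; intros a Ha. apply in_seq in Ha.
  rewrite (sumC_trunc a n) by lia.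
  apply sumC_map_ext; intros b Hb. apply in_seq in Hb.
  rewrite sumC_if. unfold lambda0.
  destruct (Nat.leb_spec b a).
  - rewrite (sumC_trunc b n) by lia.
    apply sumC_map_ext; intros c Hc. apply in_seq in Hc.
    destruct (Nat.leb_spec c b); simpl; [reflexivity | ring].
  - rewrite sumC_map_zero. symmetry.
    erewrite sumC_map_ext; [apply sumC_map_zero|]. intros c _. simpl. ring.
Qed.

Definition lambda_sym (n x y z : nat) : R :=
  lambda0 n x y z + lambda0 n x z y + lambda0 n y x z + lambda0 n y z x + lambda0 n z x y + lambda0 n z y x.

Definition wrap_a (n : nat) (h : nat -> nat -> nat -> C) (a b c : nat) : C :=
  Cplus (h a b c) (if Nat.eqb a 0 then h n b c else RtoC 0).
Definition wrap_b (n : nat) (h : nat -> nat -> nat -> C) (a b c : nat) : C :=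
  Cplus (h a b c) (if Nat.eqb b 0 then h a n c else RtoC 0).
Definition wrap_c (n : nat) (h : nat -> nat -> nat -> C) (a b c : nat) : C :=
  Cplus (h a b c) (if Nat.eqb c 0 then h a b n else RtoC 0).

Lemma box_sum_wrap n h : (1 <= n)%nat -> box_sum (S n) h = box_sum n (wrap_a n (wrap_b n (wrap_c n h))).
Proof.
  intros Hn. unfold box_sum.
  transitivity (sumC (map (fun a => sumC (map (fun b => sumC (map (fun c => wrap_c n h a b c)
     (seq 0 n))) (seq 0 (S n)))) (seq 0 (S n)))).
  { apply sumC_map_ext; intros; apply sumC_map_ext; intros. apply sumC_seq_wrap; auto. }
  transitivity (sumC (map (fun a => sumC (map (fun b => sumC (map (fun c => wrap_b n (wrap_c n h) a b c)
     (seq 0 n))) (seq 0 n))) (seq 0 (S n)))).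
  { apply sumC_map_ext; intros. rewrite sumC_seq_wrap by auto. apply sumC_map_ext; intros.
    rewrite sumC_if, <- sumC_map_plus. reflexivity. }
  rewrite sumC_seq_wrap by auto. apply sumC_map_ext; intros.
  rewrite sumC_if, <- sumC_map_plus. apply sumC_map_ext; intros.
  rewrite sumC_if, <- sumC_map_plus. reflexivity.
Qed.

Ltac case_nat_tests :=
  repeat match goal with
  | |- context [Nat.eqb ?x ?y] => destruct (Nat.eqb_spec x y); try (exfalso; lia)
  | |- context [Nat.leb ?x ?y] => destruct (Nat.leb_spec x y); try (exfalso; lia)
  end.

(* This is where the particular values of the weights lambda come from. *)
Lemma lambda_sym_wrap n a b c : (1 <= n)%nat -> (a < n)%nat -> (b < n)%nat -> (c < n)%nat ->
  wrap_a n (wrap_b n (wrap_c n (fun x y z => RtoC (lambda_sym n x y z)))) a b c = RtoC 24.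
Proof.
  intros. unfold wrap_a, wrap_b, wrap_c, lambda_sym, lambda0, lambda.
  case_nat_tests; simpl; apply injective_projections; simpl; lra.
Qed.

Lemma box_sum_lambda_sym n X : (1 <= n)%nat ->
  (forall b c, X n b c = X 0%nat b c) -> (forall a c, X a n c = X a 0%nat c) ->
  (forall a b, X a b n = X a b 0%nat) ->
  box_sum (S n) (fun a b c => Cmult (RtoC (lambda_sym n a b c)) (X a b c)) =
  Cmult (RtoC 24) (box_sum n X).
Proof.
  intros Hn Ha Hb Hc. rewrite box_sum_wrap by auto.
  unfold box_sum. rewrite <- sumC_map_scal. apply sumC_map_ext; intros a Ha'; apply in_seq in Ha'.
  rewrite <- sumC_map_scal. apply sumC_map_ext; intros b Hb'; apply in_seq in Hb'.
  rewrite <- sumC_map_scal. apply sumC_map_ext; intros c Hc'; apply in_seq in Hc'.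
  rewrite <- (lambda_sym_wrap n a b c) by lia.
  unfold wrap_a, wrap_b, wrap_c.
  destruct (Nat.eqb_spec a 0), (Nat.eqb_spec b 0), (Nat.eqb_spec c 0); subst;
    rewrite ?Ha, ?Hb, ?Hc; ring.
Qed.

Definition weighted_prod_sum (n : nat) (p q r : nat -> C) : C :=
  simplex_sum n (fun a b c => Cmult (RtoC (lambda n a b c)) (Cmult (Cmult (p a) (q b)) (r c))).

Definition period_sum (n : nat) (u : nat -> C) : C := sumC (map u (seq 0 n)).

Lemma sym6_weighted_prod_sum n (g : Z -> nat -> C) a b c : (1 <= n)%nat ->
  g a n = g a 0%nat -> g b n = g b 0%nat -> g c n = g c 0%nat ->
  sym6 (fun x y z => weighted_prod_sum n (g x) (g y) (g z)) a b c
  = Cmult (RtoC 24) (Cmult (Cmult (period_sum n (g a)) (period_sum n (g b))) (period_sum n (g c))).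
Proof.
  intros Hn Hu Hv Hw. unfold sym6, weighted_prod_sum. rewrite !simplex_sum_box_sum.
  set (X := fun x y z => Cmult (Cmult (g a x) (g b y)) (g c z)).
  assert (E2 : box_sum (S n) (fun x y z => Cmult (RtoC (lambda0 n x y z)) (Cmult (Cmult (g a x) (g c y)) (g b z))) =
               box_sum (S n) (fun x y z => Cmult (RtoC (lambda0 n x z y)) (X x y z))).
  { rewrite (box_sum_swap23 (S n)). apply box_sum_ext; intros; unfold X; ring. }
  assert (E3 : box_sum (S n) (fun x y z => Cmult (RtoC (lambda0 n x y z)) (Cmult (Cmult (g b x) (g a y)) (g c z))) =
               box_sum (S n) (fun x y z => Cmult (RtoC (lambda0 n y x z)) (X x y z))).
  { rewrite (box_sum_swap12 (S n)). apply box_sum_ext; intros; unfold X; ring. }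
  assert (E4 : box_sum (S n) (fun x y z => Cmult (RtoC (lambda0 n x y z)) (Cmult (Cmult (g b x) (g c y)) (g a z))) =
               box_sum (S n) (fun x y z => Cmult (RtoC (lambda0 n y z x)) (X x y z))).
  { rewrite (box_sum_swap23 (S n)), (box_sum_swap12 (S n)). apply box_sum_ext; intros; unfold X; ring. }
  assert (E5 : box_sum (S n) (fun x y z => Cmult (RtoC (lambda0 n x y z)) (Cmult (Cmult (g c x) (g a y)) (g b z))) =
               box_sum (S n) (fun x y z => Cmult (RtoC (lambda0 n z x y)) (X x y z))).
  { rewrite (box_sum_swap12 (S n)), (box_sum_swap23 (S n)). apply box_sum_ext; intros; unfold X; ring. }
  assert (E6 : box_sum (S n) (fun x y z => Cmult (RtoC (lambda0 n x y z)) (Cmult (Cmult (g c x) (g b y)) (g a z))) =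
               box_sum (S n) (fun x y z => Cmult (RtoC (lambda0 n z y x)) (X x y z))).
  { rewrite (box_sum_swap12 (S n)), (box_sum_swap23 (S n)), (box_sum_swap12 (S n)).
    apply box_sum_ext; intros; unfold X; ring. }
  rewrite E2, E3, E4, E5, E6.
  rewrite <- !box_sum_plus.
  transitivity (box_sum (S n) (fun x y z => Cmult (RtoC (lambda_sym n x y z)) (X x y z))).
  { apply box_sum_ext; intros. unfold lambda_sym, X.
    apply injective_projections; simpl; ring. }
  rewrite box_sum_lambda_sym by (auto; intros; unfold X; congruence).
  unfold X. rewrite box_sum_prod. reflexivity.
Qed.

(** * Sums of characters over the grid *)

Definition cexpZ_grid (n : nat) (m : Z) (j : nat) : C := cexpZ m (INR j / INR n).

Lemma cexpZ_grid_period n m : (1 <= n)%nat -> (m mod 4 = 0)%Z -> cexpZ_grid n m n = cexpZ_grid n m 0%nat.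
Proof.
  intros Hn Hm. unfold cexpZ_grid. rewrite Rdiv_diag by (apply not_0_INR; lia).
  simpl (INR 0). rewrite Rdiv_0_l, cexpZ_0. apply cexpZ_1_mod4_0; auto.
Qed.

Lemma Cmult_fixed_0 (z w : C) : z <> RtoC 1 -> w = Cmult z w -> w = RtoC 0.
Proof.
  intros Hz Hw.
  assert (Hz1 : Cminus z (RtoC 1) <> RtoC 0).
  { intros E. apply Hz. replace z with (Cplus (Cminus z (RtoC 1)) (RtoC 1)) by ring. rewrite E. ring. }
  replace w with (Cmult (Cinv (Cminus z (RtoC 1))) (Cmult (Cminus z (RtoC 1)) w))
    by (field; exact Hz1).
  replace (Cmult (Cminus z (RtoC 1)) w) with (Cminus (Cmult z w) w) by ring.
  rewrite <- Hw. ring.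
Qed.

Lemma sumC_pow_root_of_unity (z : C) n :
  Cpow z n = RtoC 1 -> z <> RtoC 1 -> sumC (map (fun j => Cpow z j) (seq 0 n)) = RtoC 0.
Proof.
  intros Hn Hz. apply (Cmult_fixed_0 z); auto.
  pose proof (geometric_sum z n) as G. rewrite Hn in G.
  replace (sumC (map (fun j => Cpow z j) (seq 0 n)))
    with (Cplus (Cmult (Cminus z (RtoC 1)) (sumC (map (fun j => Cpow z j) (seq 0 n))))
                (sumC (map (fun j => Cpow z j) (seq 0 n)))) at 1 by (rewrite G; ring).
  ring.
Qed.

Lemma cexpi_quarter_eq_1 n m : (1 <= n)%nat ->
  cexpi (PI / 2 * IZR m * / INR n) = RtoC 1 -> exists q, m = (4 * Z.of_nat n * q)%Z.
Proof.
  intros Hn H. assert (HnR : INR n <> 0) by (apply not_0_INR; lia).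
  assert (PI <> 0) by (pose proof PI_RGT_0; lra).
  destruct (cexpi_eq_1 _ H) as [q Hq]. exists q. apply eq_IZR.
  rewrite !mult_IZR, <- INR_IZR_INZ.
  apply (f_equal (fun t => t * INR n * 2 / PI)) in Hq.
  replace (PI / 2 * IZR m * / INR n * INR n * 2 / PI) with (IZR m) in Hq by (field; auto).
  rewrite Hq. simpl. field. auto.
Qed.

Lemma period_sum_cexpZ_grid n m : (1 <= n)%nat -> (m mod 4 = 0)%Z ->
  (period_sum n (cexpZ_grid n m) = RtoC (INR n) /\ exists q, m = (4 * Z.of_nat n * q)%Z) \/
  (period_sum n (cexpZ_grid n m) = RtoC 0 /\ m <> 0%Z).
Proof.
  intros Hn Hm.
  assert (HnR : INR n <> 0) by (apply not_0_INR; lia).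
  set (z := cexpi (PI / 2 * IZR m * / INR n)).
  assert (Hpow : forall j, cexpZ_grid n m j = Cpow z j).
  { intros j. unfold cexpZ_grid, cexpZ, z. rewrite <- cexpi_mult_INR. f_equal. field. auto. }
  assert (Hzn : Cpow z n = RtoC 1).
  { rewrite <- Hpow, cexpZ_grid_period by auto.
    unfold cexpZ_grid. simpl (INR 0). rewrite Rdiv_0_l. apply cexpZ_0. }
  unfold period_sum. rewrite (sumC_map_ext _ _ (fun j => Cpow z j)) by (intros; apply Hpow).
  assert (Hdec : z = RtoC 1 \/ z <> RtoC 1).
  { destruct z as [x y]. destruct (Req_dec x 1), (Req_dec y 0); subst;
      [left; reflexivity | right; intros E; injection E; auto ..]. }
  destruct Hdec as [Ez | Ez].
  - left. split.
    + rewrite Ez. apply sum_ones.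
    + apply cexpi_quarter_eq_1; auto.
  - right. split.
    + apply sumC_pow_root_of_unity; auto.
    + intros ->. apply Ez. unfold z. rewrite Rmult_0_r, Rmult_0_l. apply cexpi_0.
Qed.

(** * The cubature sum of TC_k *)

Definition cubature (n : nat) (g : R -> R -> R -> C) : C :=
  Cmult (RtoC (/ (4 * INR n ^ 3))) (simplex_sum n (fun a b c =>
    Cmult (RtoC (lambda n a b c)) (g (INR a / INR n) (INR b / INR n) (INR c / INR n)))).

Lemma cubature_0 n : cubature n (fun _ _ _ => RtoC 0) = RtoC 0.
Proof.
  unfold cubature. rewrite (simplex_sum_ext n _ (fun _ _ _ => RtoC 0)), simplex_sum_0.
  - ring.
  - intros. ring.
Qed.

Lemma cubature_plus n f g :
  cubature n (fun x1 x2 x3 => Cplus (f x1 x2 x3) (g x1 x2 x3)) = Cplus (cubature n f) (cubature n g).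
Proof.
  unfold cubature. rewrite <- Cmult_plus_distr_l, <- simplex_sum_plus. f_equal.
  apply simplex_sum_ext. intros. ring.
Qed.

Lemma cubature_scal n c f :
  cubature n (fun x1 x2 x3 => Cmult c (f x1 x2 x3)) = Cmult c (cubature n f).
Proof.
  unfold cubature.
  transitivity (Cmult (RtoC (/ (4 * INR n ^ 3))) (Cmult c (simplex_sum n (fun a b d =>
    Cmult (RtoC (lambda n a b d)) (f (INR a / INR n) (INR b / INR n) (INR d / INR n)))))).
  - f_equal. rewrite <- simplex_sum_scal. apply simplex_sum_ext. intros. ring.
  - ring.
Qed.

Lemma simplex_sum_TC n k1 k2 k3 k4 : (k1 + k2 + k3 + k4 = 0)%Z ->
  simplex_sum n (fun a b c => Cmult (RtoC (lambda n a b c))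
     (TC (k1,k2,k3,k4) (triH_point (INR a / INR n) (INR b / INR n) (INR c / INR n))))
  = Cmult (RtoC (/24)) (sumC (map (uncurry3 (fun x y z =>
      weighted_prod_sum n (cexpZ_grid n x) (cexpZ_grid n y) (cexpZ_grid n z))) (triples24 k1 k2 k3 k4))).
Proof.
  intros hs.
  rewrite (simplex_sum_ext n _ (fun a b c => Cmult (RtoC (/24)) (sumC (map (fun t =>
     Cmult (RtoC (lambda n a b c))
       (uncurry3 (fun x y z => cexpZ3 x y z (INR a / INR n) (INR b / INR n) (INR c / INR n)) t))
     (triples24 k1 k2 k3 k4))))).
  2:{ intros a b c _ _. rewrite TC_triH_point, sumC_map_scal by auto. ring. }
  rewrite simplex_sum_scal, simplex_sum_sumC. f_equal.
Qed.

Lemma delta0_neq0 k1 k2 k3 k4 :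
  (k1 <> 0 \/ k2 <> 0 \/ k3 <> 0 \/ k4 <> 0)%Z -> delta0 (k1,k2,k3,k4) = RtoC 0.
Proof.
  intros H. unfold delta0.
  destruct (Z.eqb_spec k1 0), (Z.eqb_spec k2 0), (Z.eqb_spec k3 0), (Z.eqb_spec k4 0);
    reflexivity || lia.
Qed.

(* Here the bound k1 <= k4 + 4(2n - 1) of TC_{2n-1} is used. *)
Lemma TC_index_multiples_0 n k1 k2 k3 k4 q1 q2 q3 : (1 <= n)%nat ->
  TC_index (2 * Z.of_nat n - 1) (k1,k2,k3,k4) ->
  k1 = (4 * Z.of_nat n * q1)%Z -> k2 = (4 * Z.of_nat n * q2)%Z -> k3 = (4 * Z.of_nat n * q3)%Z ->
  k1 = 0%Z /\ k2 = 0%Z /\ k3 = 0%Z /\ k4 = 0%Z.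
Proof.
  intros Hn ((hs & _) & b1 & b2 & b3 & b4) -> -> ->.
  set (N := Z.of_nat n) in *. assert (HN : (1 <= N)%Z) by lia.
  assert (k4 = 4 * N * -(q1 + q2 + q3))%Z as -> by lia.
  assert (-(q1 + q2 + q3) <= q3)%Z by nia. assert (q3 <= q2)%Z by nia. assert (q2 <= q1)%Z by nia.
  assert (q1 <= -(q1 + q2 + q3) + 1)%Z by nia.
  assert (q1 = 0 /\ q2 = 0 /\ q3 = 0)%Z as (-> & -> & ->) by lia.
  lia.
Qed.

Lemma cubature_TC_mod4_0 n k1 k2 k3 k4 : (1 <= n)%nat -> TC_index (2 * Z.of_nat n - 1) (k1,k2,k3,k4) ->
  (k1 mod 4 = 0)%Z ->
  cubature n (fun x1 x2 x3 => TC (k1,k2,k3,k4) (triH_point x1 x2 x3)) = delta0 (k1,k2,k3,k4).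
Proof.
  unfold cubature; cbv beta.
  intros Hn Hk Hm1. pose proof Hk as ((hs & h12 & h23 & h34) & _).
  assert (Hm2 : (k2 mod 4 = 0)%Z) by congruence.
  assert (Hm3 : (k3 mod 4 = 0)%Z) by congruence.
  assert (Hm4 : (k4 mod 4 = 0)%Z) by congruence.
  rewrite simplex_sum_TC, sumC_triples24 by auto. unfold sum_3subsets.
  rewrite !sym6_weighted_prod_sum by (auto; apply cexpZ_grid_period; auto).
  assert (HnR : INR n <> 0) by (apply not_0_INR; lia).
  (* Each product of three grid sums vanishes unless its three indices are
     multiples of 4n, in which case k = 0. *)
  destruct (period_sum_cexpZ_grid n k1 Hn Hm1) as [[S1 [q1 D1]]|[S1 N1]];
  destruct (period_sum_cexpZ_grid n k2 Hn Hm2) as [[S2 [q2 D2]]|[S2 N2]];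
  destruct (period_sum_cexpZ_grid n k3 Hn Hm3) as [[S3 [q3 D3]]|[S3 N3]];
  destruct (period_sum_cexpZ_grid n k4 Hn Hm4) as [[S4' [q4 D4]]|[S4' N4]];
  rewrite S1, S2, S3, S4'.
  all: try (destruct (TC_index_multiples_0 n k1 k2 k3 k4 q1 q2 q3 Hn Hk D1 D2 D3)
              as (-> & -> & -> & ->);
            simpl; apply injective_projections; simpl; field; auto).
  all: try (exfalso; first
     [ pose proof (TC_index_multiples_0 n k1 k2 k3 k4 q1 q2 q3 Hn Hk D1 D2 D3); lia
     | pose proof (TC_index_multiples_0 n k1 k2 k3 k4 q1 q2 (-(q1+q2+q4))%Z Hn Hk D1 D2 ltac:(lia)); lia
     | pose proof (TC_index_multiples_0 n k1 k2 k3 k4 q1 (-(q1+q3+q4))%Z q3 Hn Hk D1 ltac:(lia) D3); lia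
     | pose proof (TC_index_multiples_0 n k1 k2 k3 k4 (-(q2+q3+q4))%Z q2 q3 Hn Hk ltac:(lia) D2 D3); lia ]).
  all: rewrite delta0_neq0 by tauto; ring.
Qed.

Definition simplex_points (n : nat) : list (nat * nat * nat) :=
  flat_map (fun a => flat_map (fun b => map (fun c => (a, b, c)) (seq 0 (S b))) (seq 0 (S a))) (seq 0 (S n)).

Lemma simplex_sum_points n F : simplex_sum n F = sumC (map (uncurry3 F) (simplex_points n)).
Proof.
  unfold simplex_sum, simplex_points. rewrite sumC_flat_map. apply sumC_map_ext; intros a _.
  rewrite sumC_flat_map. apply sumC_map_ext; intros b _. rewrite map_map. reflexivity.
Qed.

Lemma in_simplex_points n a b c : In (a, b, c) (simplex_points n) <-> (c <= b <= a /\ a <= n)%nat.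
Proof.
  unfold simplex_points. rewrite in_flat_map. split.
  - intros (a' & Ha' & H). rewrite in_flat_map in H. destruct H as (b' & Hb' & H).
    rewrite in_map_iff in H. destruct H as (c' & E & Hc'). injection E; intros; subst.
    apply in_seq in Ha'. apply in_seq in Hb'. apply in_seq in Hc'. lia.
  - intros H. exists a. split; [apply in_seq; lia|]. rewrite in_flat_map. exists b.
    split; [apply in_seq; lia|]. rewrite in_map_iff. exists c. split; [reflexivity|apply in_seq; lia].
Qed.

Lemma NoDup_flat_map_inj {A B} (f : A -> list B) (l : list A) :
  NoDup l -> (forall x, In x l -> NoDup (f x)) ->
  (forall x y z, In x l -> In y l -> In z (f x) -> In z (f y) -> x = y) ->
  NoDup (flat_map f l).
Proof.
  induction l as [|a l IH]; intros Hl Hf Hd; simpl; [constructor|].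
  inversion Hl; subst. apply NoDup_app.
  - apply Hf; left; auto.
  - apply IH; auto. intros; apply Hf; right; auto. intros; eapply Hd; eauto; right; auto.
  - intros z Hz Hz'. apply in_flat_map in Hz'. destruct Hz' as (y & Hy & Hzy).
    assert (a = y) by (eapply Hd; eauto; [left|right]; auto). subst. contradiction.
Qed.

Lemma NoDup_simplex_points n : NoDup (simplex_points n).
Proof.
  unfold simplex_points. apply NoDup_flat_map_inj.
  - apply seq_NoDup.
  - intros a _. apply NoDup_flat_map_inj.
    + apply seq_NoDup.
    + intros b _. apply NoDup_map_NoDup_ForallPairs; [|apply seq_NoDup].
      intros x y _ _ E. injection E; auto.
    + intros x y z _ _ Hx Hy. apply in_map_iff in Hx, Hy.
      destruct Hx as (c & <- & _), Hy as (c' & E & _). injection E; auto.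
  - intros x y z _ _ Hx Hy. apply in_flat_map in Hx, Hy.
    destruct Hx as (b & _ & Hx), Hy as (b' & _ & Hy). apply in_map_iff in Hx, Hy.
    destruct Hx as (c & <- & _), Hy as (c' & E & _). injection E; auto.
Qed.

(* Induced on grid points by t |-> (t4 + 1, t1, t2, t3) (followed by the
   projection to R^4_H), which maps triangle_H onto itself. *)
Definition simplex_rotation (n : nat) (t : nat * nat * nat) : nat * nat * nat :=
  match t with (a, b, c) => ((n - c)%nat, (a - c)%nat, (b - c)%nat) end.

Lemma simplex_rotation_perm n : Permutation (map (simplex_rotation n) (simplex_points n)) (simplex_points n).
Proof.
  apply NoDup_Permutation.
  - apply NoDup_map_NoDup_ForallPairs; [|apply NoDup_simplex_points].
    intros [[a b] c] [[a' b'] c'] H H' E. apply in_simplex_points in H, H'. simpl in E.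
    injection E; intros. f_equal; [f_equal|]; lia.
  - apply NoDup_simplex_points.
  - intros [[a b] c]. rewrite in_map_iff. split.
    + intros ([[a' b'] c'] & E & H). apply in_simplex_points in H. simpl in E. injection E; intros; subst.
      apply in_simplex_points. lia.
    + intros H. apply in_simplex_points in H. exists ((b + n - a)%nat, (c + n - a)%nat, (n - a)%nat).
      split; [simpl; f_equal; [f_equal|]; lia|]. apply in_simplex_points; lia.
Qed.

Lemma lambda_rotation n a b c : (c <= b <= a /\ a <= n)%nat ->
  lambda n (n - c) (a - c) (b - c) = lambda n a b c.
Proof. intros. unfold lambda. case_nat_tests; reflexivity. Qed.

Lemma cexpZ3_rotation r a b c d x1 x2 x3 : (a + b + c + d = 0)%Z -> (a mod 4 = r mod 4)%Z ->
  cexpZ3 a b c (1 - x3) (x1 - x3) (x2 - x3) = Cmult (cexpi (PI/2*IZR r)) (cexpZ3 b c d x1 x2 x3).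
Proof.
  intros H Hr. rewrite !cexpZ3_cexpi, <- (cexpi_mod4 a r Hr), <- cexpi_add. f_equal.
  assert (IZR d = - IZR a - IZR b - IZR c) as ->.
  { replace d with (-a-b-c)%Z by lia. rewrite !minus_IZR, opp_IZR. ring. }
  ring.
Qed.

Lemma TC_rotation k1 k2 k3 k4 x1 x2 x3 : inH (k1,k2,k3,k4) ->
  TC (k1,k2,k3,k4) (triH_point (1 - x3) (x1 - x3) (x2 - x3)) =
  Cmult (cexpi (PI/2*IZR k1)) (TC (k1,k2,k3,k4) (triH_point x1 x2 x3)).
Proof.
  intros (hs & h12 & h23 & h34).
  rewrite !TC_triH_point by auto. unfold sumC, triples24. simpl map. simpl fold_right. simpl uncurry3.
  repeat first [ rewrite (cexpZ3_rotation k1 _ _ _ k1) by (lia || congruence)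
               | rewrite (cexpZ3_rotation k1 _ _ _ k2) by (lia || congruence)
               | rewrite (cexpZ3_rotation k1 _ _ _ k3) by (lia || congruence)
               | rewrite (cexpZ3_rotation k1 _ _ _ k4) by (lia || congruence) ].
  ring.
Qed.

Lemma cubature_TC_mod4_neq0 n k1 k2 k3 k4 : (1 <= n)%nat -> inH (k1,k2,k3,k4) -> (k1 mod 4 <> 0)%Z ->
  cubature n (fun x1 x2 x3 => TC (k1,k2,k3,k4) (triH_point x1 x2 x3)) = delta0 (k1,k2,k3,k4).
Proof.
  unfold cubature; cbv beta.
  intros Hn Hk Hr.
  assert (HnR : INR n <> 0) by (apply not_0_INR; lia).
  set (F := fun a b c => Cmult (RtoC (lambda n a b c))
     (TC (k1,k2,k3,k4) (triH_point (INR a / INR n) (INR b / INR n) (INR c / INR n)))).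
  set (z := cexpi (PI/2*IZR k1)).
  assert (Hz : z <> RtoC 1).
  { intros E. apply Hr. destruct (cexpi_quarter_eq_1 1 k1) as [q ->].
    - lia.
    - simpl INR. rewrite Rinv_1, Rmult_1_r. exact E.
    - change (Z.of_nat 1) with 1%Z. rewrite Z.mul_1_r, Z.mul_comm. apply Z_mod_mult. }
  assert (Hinv : simplex_sum n F = Cmult z (simplex_sum n F)).
  { rewrite simplex_sum_points.
    transitivity (sumC (map (uncurry3 F) (map (simplex_rotation n) (simplex_points n)))).
    { apply sumC_perm, Permutation_map. symmetry; apply simplex_rotation_perm. }
    rewrite map_map, <- sumC_map_scal. apply sumC_map_ext.
    intros [[a b] c] H. apply in_simplex_points in H. simpl. unfold F.
    rewrite lambda_rotation by auto.
    rewrite !minus_INR by lia.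
    replace ((INR n - INR c) / INR n) with (1 - INR c / INR n) by (field; auto).
    replace ((INR a - INR c) / INR n) with (INR a / INR n - INR c / INR n) by (field; auto).
    replace ((INR b - INR c) / INR n) with (INR b / INR n - INR c / INR n) by (field; auto).
    rewrite TC_rotation by auto. fold z. ring. }
  rewrite (Cmult_fixed_0 z _ Hz Hinv), Cmult_0_r, delta0_neq0; auto.
  left. intros ->. apply Hr. reflexivity.
Qed.


Definition TC_comb (L : list (C * Z4)) (t : R4) : C :=
  fold_right (fun p acc => Cplus (Cmult (fst p) (TC (snd p) t)) acc) (RtoC 0) L.

Definition delta0_comb (L : list (C * Z4)) : C :=
  fold_right (fun p acc => Cplus (Cmult (fst p) (delta0 (snd p))) acc) (RtoC 0) L.

Lemma is_simplex_int_TC_comb L : (forall p, In p L -> inH (snd p)) ->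
  exists V, is_simplex_int (fun x1 x2 x3 => TC_comb L (triH_point x1 x2 x3)) V /\ Cmult (RtoC 6) V = delta0_comb L.
Proof.
  induction L as [|[c k] L IH]; intros H.
  - exists (RtoC 0). split. apply is_simplex_int_0. simpl. ring.
  - destruct IH as (V & HV & EV). { intros; apply H; right; auto. }
    destruct k as [[[k1 k2] k3] k4].
    destruct (is_simplex_int_TC k1 k2 k3 k4) as (U & HU & EU). { apply (H (c, (k1,k2,k3,k4))); left; auto. }
    exists (Cplus (Cmult c U) V). split.
    + apply (is_simplex_int_plus (fun x1 x2 x3 => Cmult c (TC (k1,k2,k3,k4) (triH_point x1 x2 x3)))
                     (fun x1 x2 x3 => TC_comb L (triH_point x1 x2 x3))); auto.
      apply is_simplex_int_scal; auto.
    + unfold delta0_comb; cbn [fold_right fst snd]; fold (delta0_comb L). rewrite <- EV, <- EU. ring.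
Qed.

Lemma cubature_TC n k : (1 <= n)%nat -> TC_index (2 * Z.of_nat n - 1) k ->
  cubature n (fun x1 x2 x3 => TC k (triH_point x1 x2 x3)) = delta0 k.
Proof.
  intros Hn Hk. destruct k as [[[k1 k2] k3] k4].
  destruct (Z.eq_dec (k1 mod 4) 0).
  - apply cubature_TC_mod4_0; auto.
  - apply cubature_TC_mod4_neq0; auto. apply Hk.
Qed.

Lemma cubature_TC_comb n L : (1 <= n)%nat -> (forall p, In p L -> TC_index (2 * Z.of_nat n - 1) (snd p)) ->
  cubature n (fun x1 x2 x3 => TC_comb L (triH_point x1 x2 x3)) = delta0_comb L.
Proof.
  intros Hn. induction L as [|[c k] L IH]; intros H.
  - apply cubature_0.
  - transitivity (Cplus (Cmult c (cubature n (fun x1 x2 x3 => TC k (triH_point x1 x2 x3))))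
                        (cubature n (fun x1 x2 x3 => TC_comb L (triH_point x1 x2 x3)))).
    + rewrite <- cubature_scal, <- cubature_plus. reflexivity.
    + rewrite cubature_TC, IH; auto.
      * intros p Hp. apply H. right. exact Hp.
      * apply (H (c, k)). left. reflexivity.
Qed.

Lemma int_simplex_TC_comb L : (forall p, In p L -> inH (snd p)) ->
  Cmult (RtoC 6) (int_simplex (fun x1 x2 x3 => TC_comb L (triH_point x1 x2 x3))) = delta0_comb L.
Proof.
  intros HL. destruct (is_simplex_int_TC_comb L HL) as (V & HV & EV).
  rewrite (int_simplex_is _ _ HV). exact EV.
Qed.

Lemma int_simplex_ext f g :
  (forall x1 x2 x3, 0 <= x3 <= x2 -> x2 <= x1 <= 1 -> f x1 x2 x3 = g x1 x2 x3) ->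
  int_simplex f = int_simplex g.
Proof.
  intros H. unfold int_simplex.
  apply CRInt_ext. intros x1 Hx1. rewrite Rmin_left, Rmax_right in Hx1 by lra.
  apply CRInt_ext. intros x2 Hx2. rewrite Rmin_left, Rmax_right in Hx2 by lra.
  apply CRInt_ext. intros x3 Hx3. rewrite Rmin_left, Rmax_right in Hx3 by lra.
  apply H; lra.
Qed.

Lemma grid_in_simplex n a b c : (1 <= n)%nat -> (c <= b <= a)%nat -> (a <= n)%nat ->
  0 <= INR c / INR n <= INR b / INR n /\ INR b / INR n <= INR a / INR n <= 1.
Proof.
  intros Hn Hcba Han.
  assert (HnR : 0 < INR n) by (apply lt_0_INR; lia).
  assert (Hc : 0 <= INR c) by apply pos_INR.
  assert (Hcb : INR c <= INR b) by (apply le_INR; lia).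
  assert (Hba : INR b <= INR a) by (apply le_INR; lia).
  assert (Han' : INR a <= INR n) by (apply le_INR; lia).
  unfold Rdiv. repeat split.
  - apply Rmult_le_pos; [lra | left; apply Rinv_0_lt_compat; lra].
  - apply Rmult_le_compat_r; [left; apply Rinv_0_lt_compat|]; lra.
  - apply Rmult_le_compat_r; [left; apply Rinv_0_lt_compat|]; lra.
  - rewrite <- (Rinv_r (INR n)) by lra. apply Rmult_le_compat_r; [left; apply Rinv_0_lt_compat|]; lra.
Qed.

Lemma cubature_ext n f g : (1 <= n)%nat ->
  (forall x1 x2 x3, 0 <= x3 <= x2 -> x2 <= x1 <= 1 -> f x1 x2 x3 = g x1 x2 x3) ->
  cubature n f = cubature n g.
Proof.
  intros Hn H. unfold cubature. f_equal. apply simplex_sum_ext. intros a b c Hcba Han.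
  destruct (grid_in_simplex n a b c Hn Hcba Han). rewrite H; auto.
Qed.

Theorem theorem4p9 (n : nat) (f : R -> R -> R -> C) :
  (1 <= n)%nat ->
  in_TC (2 * Z.of_nat n - 1)%Z
    (fun t : R4 => match t with (t1, t2, t3, t4) =>
                     f (t1 - t4) (t2 - t4) (t3 - t4) end) ->
  Cmult (RtoC 6) (int_simplex f) =
  Cmult (RtoC (/ (4 * INR n ^ 3)))
    (cubature_sum n (fun k1 k2 k3 =>
       Cmult (RtoC (lambda n k1 k2 k3))
             (f (INR k1 / INR n) (INR k2 / INR n) (INR k3 / INR n)))).
Proof.
  intros Hn (L & HL & Heq).
  rewrite Forall_forall in HL.
  assert (Hf : forall x1 x2 x3, 0 <= x3 <= x2 -> x2 <= x1 <= 1 ->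
                 f x1 x2 x3 = TC_comb L (triH_point x1 x2 x3)).
  { intros x1 x2 x3 H1 H2. unfold TC_comb. rewrite <- (Heq _ (in_triH_point x1 x2 x3 H1 H2)).
    unfold triH_point. f_equal; field. }
  rewrite cubature_sum_simplex_sum. change (6 * int_simplex f = cubature n f)%C.
  rewrite (int_simplex_ext _ _ Hf), (cubature_ext n _ _ Hn Hf).
  rewrite int_simplex_TC_comb, cubature_TC_comb; auto.
  intros p Hp. apply HL; auto.
Qed.
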